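(* Let $\mathcal{G}^{\mathrm{aff}}$ be the family of all routing problems with affine latency functions, with homogeneous users. For a bound $\beta\ge0$, an optimal $\beta$-bounded tolling mechanism is $$T^{\mathrm{opt}+}(af+b;\beta)=\begin{cases}\beta a f & \beta\in[0,1),\\ a f & \beta\ge1,\end{cases}$$ with $$\mathrm{PoA}\big(\mathcal{G}^{\mathrm{aff}},T^{\mathrm{opt}+}(\beta)\big)=\begin{cases}\dfrac{4}{3+2\beta-\beta^2} & \beta\in[0,1),\\ 1 & \beta\ge1.\end{cases}$$ An optimal $\beta$-bounded subsidy mechanism is $$T^{\mathrm{opt}-}(af+b;\beta)=\begin{cases}-\beta b & \beta\in[0,1/2),\\ -b/2 & \beta\ge1/2,\end{cases}$$ with $$\mathrm{PoA}\big(\mathcal{G}^{\mathrm{aff}},T^{\mathrm{opt}-}(\beta)\big)=\begin{cases}\dfrac{4}{3+2\hat\beta-\hat\beta^2} & \beta\in[0,1/2),\\ 1 & \beta\ge1/2,\end{cases}\qquad \hat\beta=\frac{1}{1-\beta}-1.$$ Consequently, for every $\beta\in(0,1)$, $\mathrm{PoA}(\mathcal{G}^{\mathrm{aff}},T^{\mathrm{opt}+}(\beta))>\mathrm{PoA}(\mathcal{G}^{\mathrm{aff}},T^{\mathrm{opt}-}(\beta))$.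
   Context: A routing problem $G$ consists of a directed graph $(V,E)$, origin–destination pairs $(o_i,d_i)$ with traffic masses $r_i>0$, $\sum_ir_i=1$, and for each edge $e$ a latency function $\ell_e$; in $\mathcal{G}^{\mathrm{aff}}$ every latency has the form $\ell(f)=af+b$ with $a,b\ge0$, and $L(\mathcal{G}^{\mathrm{aff}})$ is the set of all such functions. Let $\mathcal{P}_i$ be the set of simple $o_i$–$d_i$ paths. A flow assigns mass $f_P\ge0$ to each path, is feasible if $\sum_{P\in\mathcal{P}_i}f_P=r_i$, and has edge flows $f_e=\sum_{P\ni e}f_P$; its total latency is $\mathcal{L}(f)=\sum_ef_e\ell_e(f_e)$ and $\mathcal{L}^{\mathrm{opt}}(G)$ is the minimum over feasible flows. Users form a continuum $N=\bigcup_iN_i$ of disjoint intervals of Lebesgue measure $r_i$, choosing paths in $\mathcal{P}_i$; users are homogeneous (sensitivity $1$). An incentive mechanism $T$ assigns to each latency $\ell$ a function $T(\ell):[0,1]\to\mathbb{R}$, and edge $e$ receives $\tau_e=T(\ell_e)$. A user on path $P$ under flow $f$ has cost $\sum_{e\in P}(\ell_e(f_e)+\tau_e(f_e))$; a Nash flow is a feasible flow in which every user uses a cost-minimizing path. $\mathcal{L}^{\mathrm{Nash}}(G,T)$ is the highest total latency of a Nash flow and $\mathrm{PoA}(\mathcal{G},T)=\sup_{G\in\mathcal{G}}\mathcal{L}^{\mathrm{Nash}}(G,T)/\mathcal{L}^{\mathrm{opt}}(G)$. A $\beta$-bounded tolling mechanism satisfies $T(\ell)[f]\in[0,\beta\ell(f)]$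 for all $f\in[0,1]$; a $\beta$-bounded subsidy mechanism satisfies $T(\ell)[f]\in[-\beta\ell(f),0]$. An optimal $\beta$-bounded tolling (subsidy) mechanism is one minimizing $\mathrm{PoA}(\mathcal{G}^{\mathrm{aff}},\cdot)$ over all $\beta$-bounded tolling (subsidy) mechanisms. *)

From Stdlib Require Import Reals Lra List.
Import ListNotations.
Open Scope R_scope.

Record Edge := mkEdge { tl : nat; hd : nat; ea : R; eb : R }.

Record Comm := mkComm { orig : nat; dest : nat; mass : R }.

(** A routing problem: vertices 0..nV-1, edges (indexed by their position
    in the list), commodities (indexed by their position in the list). *)
Record RP := mkRP { nV : nat; edges : list Edge; comms : list Comm }.

Definition dummy_edge : Edge := mkEdge 0 0 0 0.
Definition dummy_comm : Comm := mkComm 0 0 0.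

Definition edge (G : RP) (e : nat) : Edge := nth e (edges G) dummy_edge.
Definition comm (G : RP) (i : nat) : Comm := nth i (comms G) dummy_comm.
Definition nE (G : RP) : nat := length (edges G).
Definition nC (G : RP) : nat := length (comms G).

Definition sumR (l : list R) : R := fold_right Rplus 0 l.

Definition wf_RP (G : RP) : Prop :=
  (forall e, (e < nE G)%nat ->
      (tl (edge G e) < nV G)%nat /\ (hd (edge G e) < nV G)%nat /\
      0 <= ea (edge G e) /\ 0 <= eb (edge G e)) /\
  NoDup (map (fun x => (tl x, hd x)) (edges G)) /\
  (forall i, (i < nC G)%nat ->
      (orig (comm G i) < nV G)%nat /\ (dest (comm G i) < nV G)%nat /\
      0 < mass (comm G i)) /\
  sumR (map mass (comms G)) = 1.

(** Paths are lists of edge indices. [walk G u p d]: p is a walk from u to d. *)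
Fixpoint walk (G : RP) (u : nat) (p : list nat) (d : nat) : Prop :=
  match p with
  | [] => u = d
  | e :: p' => (e < nE G)%nat /\ tl (edge G e) = u /\ walk G (hd (edge G e)) p' d
  end.

Fixpoint verts (G : RP) (u : nat) (p : list nat) : list nat :=
  match p with
  | [] => [u]
  | e :: p' => u :: verts G (hd (edge G e)) p'
  end.

Definition is_path (G : RP) (o d : nat) (p : list nat) : Prop :=
  walk G o p d /\ NoDup (verts G o p).

Definition in_Paths (G : RP) (i : nat) (p : list nat) : Prop :=
  is_path G (orig (comm G i)) (dest (comm G i)) p.

(** A flow: finitely many entries (i, P, x) assigning mass x to path P of
    commodity i (repeated entries add up). *)
Definition Flow := list (nat * list nat * R).

Definition feasible (G : RP) (f : Flow) : Prop :=
  (forall i p x, In (i, p, x) f -> (i < nC G)%nat /\ in_Paths G i p /\ 0 <= x) /\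
  (forall i, (i < nC G)%nat ->
     sumR (map (fun t => match t with (j, _, x) => if Nat.eqb j i then x else 0 end) f)
       = mass (comm G i)).

Definition eflow (f : Flow) (e : nat) : R :=
  sumR (map (fun t => match t with (_, p, x) => if existsb (Nat.eqb e) p then x else 0 end) f).

Definition lat (G : RP) (e : nat) (y : R) : R := ea (edge G e) * y + eb (edge G e).

Definition total_latency (G : RP) (f : Flow) : R :=
  sumR (map (fun e => eflow f e * lat G e (eflow f e)) (seq 0 (nE G))).

(** * Incentive mechanisms
    A latency in L(G^aff) is l(f) = a f + b (a,b >= 0), determined by (a,b);
    a mechanism maps it to the function T a b : [0,1] -> R. *)
Definition Mechanism := R -> R -> R -> R.

(** Cost of path p under flow f for homogeneous users (sensitivity 1). *)
Definition path_cost (G : RP) (T : Mechanism) (f : Flow) (p : list nat) : R :=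
  sumR (map (fun e => lat G e (eflow f e)
                      + T (ea (edge G e)) (eb (edge G e)) (eflow f e)) p).

Definition Nash (G : RP) (T : Mechanism) (f : Flow) : Prop :=
  feasible G f /\
  forall i p x, In (i, p, x) f -> 0 < x ->
    forall q, in_Paths G i q -> path_cost G T f p <= path_cost G T f q.

Definition PoA_le (T : Mechanism) (v : R) : Prop :=
  forall G f g, wf_RP G -> Nash G T f -> feasible G g ->
    total_latency G f <= v * total_latency G g.

Definition PoA_is (T : Mechanism) (v : R) : Prop :=
  PoA_le T v /\ forall v', v' < v -> ~ PoA_le T v'.

Definition tolling_bounded (beta : R) (T : Mechanism) : Prop :=
  forall a b y, 0 <= a -> 0 <= b -> 0 <= y <= 1 ->
    0 <= T a b y <= beta * (a * y + b).

Definition subsidy_bounded (beta : R) (T : Mechanism) : Prop :=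
  forall a b y, 0 <= a -> 0 <= b -> 0 <= y <= 1 ->
    - (beta * (a * y + b)) <= T a b y <= 0.

(** T minimizes PoA among mechanisms satisfying [bnd]:
    PoA(T) <= PoA(T') for all admissible T' (as extended-real suprema). *)
Definition optimal_among (bnd : Mechanism -> Prop) (T : Mechanism) : Prop :=
  bnd T /\ forall T', bnd T' -> forall v, PoA_le T' v -> PoA_le T v.

Definition T_opt_plus (beta : R) : Mechanism :=
  fun a b y => if Rlt_dec beta 1 then beta * a * y else a * y.

Definition T_opt_minus (beta : R) : Mechanism :=
  fun a b y => if Rlt_dec beta (1/2) then - (beta * b) else - (b / 2).

Definition poa_plus (beta : R) : R :=
  if Rlt_dec beta 1 then 4 / (3 + 2 * beta - beta ^ 2) else 1.

Definition beta_hat (beta : R) : R := 1 / (1 - beta) - 1.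

Definition poa_minus (beta : R) : R :=
  if Rlt_dec beta (1/2) then 4 / (3 + 2 * beta_hat beta - (beta_hat beta) ^ 2) else 1.

(* A Nash flow [f] satisfies the variational inequality
   [sum_e c_e(f_e) f_e <= sum_e c_e(f_e) g_e] for the perceived costs
   [c_e = l_e + tau_e] and every feasible flow [g].  Both optimal mechanisms make
   the perceived cost of [a f + b] proportional to [(1 + g) a f + b] for an
   effective toll level [g] in [[0, 1]] ([beta] for tolls, [beta_hat] for
   subsidies, capped at 1), and for such costs
   [y l(y) - v z l(z) <= v c(y) (y - z)] with [v = 4 / (3 + 2g - g^2)] is a sum of
   squares; summing it over the edges gives [L(f) <= v L(g)].  Conversely, every
   admissible mechanism keeps the flow routed entirely on the variable link a Nash
   flow of Pigou's network with constant latency [1 + g], whose price of anarchy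
   is [v].  Since [v] decreases in [g] and [beta < beta_hat], subsidies do better. *)

From Stdlib Require Import Reals Lra Lia List.
Import ListNotations.
Open Scope R_scope.

Section SumR.

Context {A : Type}.
Implicit Types (F H : A -> R) (l : list A).

Lemma sumR_map_le F H l :
  (forall x, In x l -> F x <= H x) -> sumR (map F l) <= sumR (map H l).
Proof.
  induction l as [|a l IH]; simpl; intros Hle; [lra|].
  assert (F a <= H a) by auto.
  assert (sumR (map F l) <= sumR (map H l)) by auto.
  lra.
Qed.

Lemma sumR_map_ext F H l :
  (forall x, In x l -> F x = H x) -> sumR (map F l) = sumR (map H l).
Proof.
  induction l as [|a l IH]; simpl; intros Heq; [reflexivity|].
  rewrite (Heq a), IH; auto.
Qed.

Lemma sumR_map_zero F l : (forall x, In x l -> F x = 0) -> sumR (map F l) = 0.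
Proof.
  induction l as [|a l IH]; simpl; intros Hz; [reflexivity|].
  rewrite (Hz a), IH; auto; lra.
Qed.

Lemma sumR_map_nonneg F l : (forall x, In x l -> 0 <= F x) -> 0 <= sumR (map F l).
Proof.
  intros Hpos. rewrite <- (sumR_map_zero (fun _ => 0) l) by auto.
  apply sumR_map_le; auto.
Qed.

Lemma sumR_map_plus F H l :
  sumR (map (fun x => F x + H x) l) = sumR (map F l) + sumR (map H l).
Proof. induction l as [|a l IH]; simpl; [lra|]. rewrite IH; lra. Qed.

Lemma sumR_map_minus F H l :
  sumR (map (fun x => F x - H x) l) = sumR (map F l) - sumR (map H l).
Proof. induction l as [|a l IH]; simpl; [lra|]. rewrite IH; lra. Qed.

Lemma sumR_map_scal c F l : sumR (map (fun x => c * F x) l) = c * sumR (map F l).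
Proof. induction l as [|a l IH]; simpl; [lra|]. rewrite IH; lra. Qed.

End SumR.

Lemma sumR_map_swap {A B : Type} (F : A -> B -> R) (l : list A) (l' : list B) :
  sumR (map (fun x => sumR (map (F x) l')) l) =
  sumR (map (fun y => sumR (map (fun x => F x y) l)) l').
Proof.
  induction l as [|a l IH]; simpl.
  - symmetry; apply sumR_map_zero; auto.
  - rewrite IH, <- sumR_map_plus; reflexivity.
Qed.

Lemma sumR_indicator (j : nat) (c : R) (l : list nat) : NoDup l -> In j l ->
  sumR (map (fun i => if Nat.eqb j i then c else 0) l) = c.
Proof.
  induction l as [|a l IH]; intros Hnd Hj; [contradiction|].
  apply NoDup_cons_iff in Hnd as [Ha Hl]. simpl.
  destruct (Nat.eqb_spec j a) as [<-|Hne].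
  - rewrite sumR_map_zero; [lra|]. intros i Hi.
    destruct (Nat.eqb_spec j i); [subst; contradiction|reflexivity].
  - destruct Hj as [->|Hj]; [contradiction|]. rewrite IH; auto; lra.
Qed.

Lemma sumR_seq_indicator (j n : nat) (c : R) : (j < n)%nat ->
  sumR (map (fun i => if Nat.eqb j i then c else 0) (seq 0 n)) = c.
Proof. intros Hj. apply sumR_indicator; [apply seq_NoDup | apply in_seq; lia]. Qed.

Lemma walk_edges_lt G u p d : walk G u p d -> forall e, In e p -> (e < nE G)%nat.
Proof.
  revert u; induction p as [|e0 p IH]; simpl; intros u Hw e He; [contradiction|].
  destruct Hw as [Hlt [_ Hw]], He as [<-|He]; eauto.
Qed.

Lemma walk_tl_in_verts G u p d :
  walk G u p d -> forall e, In e p -> In (tl (edge G e)) (verts G u p).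
Proof.
  revert u; induction p as [|e0 p IH]; simpl; intros u Hw e He; [contradiction|].
  destruct Hw as [_ [Htl Hw]], He as [<-|He]; [left; auto | right; eauto].
Qed.

Lemma walk_NoDup_edges G u p d : walk G u p d -> NoDup (verts G u p) -> NoDup p.
Proof.
  revert u; induction p as [|e0 p IH]; simpl; intros u Hw Hnd; [constructor|].
  destruct Hw as [_ [Htl Hw]]. apply NoDup_cons_iff in Hnd as [Hu Hnd].
  constructor; [|eauto].
  intros He0. apply Hu. rewrite <- Htl. eapply walk_tl_in_verts; eauto.
Qed.

Lemma in_Paths_edges G i p :
  in_Paths G i p -> NoDup p /\ forall e, In e p -> (e < nE G)%nat.
Proof.
  intros [Hw Hnd]. split; [eapply walk_NoDup_edges | eapply walk_edges_lt]; eauto.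
Qed.

Lemma walk_from_sink G u p d :
  (forall e, (e < nE G)%nat -> tl (edge G e) <> u) -> walk G u p d -> p = [] /\ u = d.
Proof.
  intros Hsink Hw. destruct p as [|e p]; [auto|].
  destruct Hw as [He [Htl _]]. exfalso; exact (Hsink e He Htl).
Qed.

Lemma sumR_edges_on_path (C : nat -> R) n p :
  NoDup p -> (forall e, In e p -> (e < n)%nat) ->
  sumR (map (fun e => if existsb (Nat.eqb e) p then C e else 0) (seq 0 n)) =
  sumR (map C p).
Proof.
  induction p as [|a p IH]; intros Hnd Hlt; simpl.
  - apply sumR_map_zero; auto.
  - apply NoDup_cons_iff in Hnd as [Ha Hnd].
    rewrite <- IH by (auto; intros; apply Hlt; right; auto).
    rewrite <- (sumR_seq_indicator a n (C a)) by (apply Hlt; left; auto).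
    rewrite <- sumR_map_plus. apply sumR_map_ext. intros e _.
    destruct (Nat.eqb_spec e a) as [->|Hne]; simpl.
    + rewrite Nat.eqb_refl.
      destruct (existsb (Nat.eqb a) p) eqn:Hex; [|lra].
      apply existsb_exists in Hex as [x [Hx Hax]].
      apply Nat.eqb_eq in Hax; subst; contradiction.
    + destruct (Nat.eqb_spec a e); [congruence|lra].
Qed.

Lemma sumR_weighted_eflow (C : nat -> R) n (h : Flow) :
  (forall i p x, In (i, p, x) h -> NoDup p /\ forall e, In e p -> (e < n)%nat) ->
  sumR (map (fun e => C e * eflow h e) (seq 0 n)) =
  sumR (map (fun '(_, p, x) => x * sumR (map C p)) h).
Proof.
  intros Hh. unfold eflow.
  erewrite sumR_map_ext by (intros e _; symmetry; apply sumR_map_scal).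
  rewrite sumR_map_swap. apply sumR_map_ext. intros [[i p] x] Hin.
  destruct (Hh i p x Hin) as [Hnd Hlt].
  rewrite <- (sumR_edges_on_path C n p), <- sumR_map_scal by auto.
  apply sumR_map_ext. intros e _. destruct (existsb (Nat.eqb e) p); ring.
Qed.

Lemma sumR_by_commodity (F : nat -> list nat -> R -> R) n (h : Flow) :
  (forall i p x, In (i, p, x) h -> (i < n)%nat) ->
  sumR (map (fun '(j, p, x) => F j p x) h) =
  sumR (map (fun i => sumR (map (fun '(j, p, x) =>
                                   if Nat.eqb j i then F j p x else 0) h))
            (seq 0 n)).
Proof.
  intros Hh. rewrite sumR_map_swap. apply sumR_map_ext. intros [[j p] x] Hin.
  rewrite sumR_seq_indicator; eauto.
Qed.

Lemma commodity_used_path (f : Flow) i :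
  0 < sumR (map (fun '(j, _, x) => if Nat.eqb j i then x else 0) f) ->
  exists p x, In (i, p, x) f /\ 0 < x.
Proof.
  induction f as [|[[j p] x] f IH]; simpl; intros Hpos; [lra|].
  destruct (Nat.eqb_spec j i) as [->|_].
  - destruct (Rlt_or_le 0 x) as [Hx|Hx]; [exists p, x; auto|].
    destruct IH as [p' [x' [Hin Hx']]]; [lra|]. exists p', x'; auto.
  - destruct IH as [p' [x' [Hin Hx']]]; [lra|]. exists p', x'; auto.
Qed.

Lemma eflow_nonneg G h e : feasible G h -> 0 <= eflow h e.
Proof.
  intros [Hh _]. apply sumR_map_nonneg. intros [[i p] x] Hin.
  destruct (Hh _ _ _ Hin) as [_ [_ Hx]]. destruct (existsb (Nat.eqb e) p); lra.
Qed.

Lemma total_latency_nonneg G h : wf_RP G -> feasible G h -> 0 <= total_latency G h.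
Proof.
  intros [Hedges _] Hh. apply sumR_map_nonneg. intros e He. apply in_seq in He.
  destruct (Hedges e ltac:(lia)) as [_ [_ [Ha Hb]]].
  pose proof (eflow_nonneg G h e Hh). unfold lat. nra.
Qed.

(** * Nash flows and upper bounds *)

Definition edge_cost (G : RP) (T : Mechanism) (f : Flow) (e : nat) : R :=
  lat G e (eflow f e) + T (ea (edge G e)) (eb (edge G e)) (eflow f e).

Lemma Nash_common_cost G T f i : wf_RP G -> Nash G T f -> (i < nC G)%nat ->
  exists d, (forall p x, In (i, p, x) f -> 0 < x -> path_cost G T f p = d) /\
            (forall q, in_Paths G i q -> d <= path_cost G T f q).
Proof.
  intros [_ [_ [Hcomms _]]] [[Hf Hmass] HN] Hi.
  destruct (Hcomms i Hi) as [_ [_ Hpos]].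
  destruct (commodity_used_path f i) as [p0 [x0 [Hin0 Hx0]]]; [rewrite Hmass; auto|].
  exists (path_cost G T f p0). split; [|eauto].
  intros p x Hin Hx. destruct (Hf _ _ _ Hin) as [_ [Hp _]].
  destruct (Hf _ _ _ Hin0) as [_ [Hp0 _]].
  pose proof (HN _ _ _ Hin Hx _ Hp0). pose proof (HN _ _ _ Hin0 Hx0 _ Hp). lra.
Qed.

Lemma Nash_commodity_cost_le G T f g i :
  wf_RP G -> Nash G T f -> feasible G g -> (i < nC G)%nat ->
  sumR (map (fun '(j, p, x) => if Nat.eqb j i then x * path_cost G T f p else 0) f) <=
  sumR (map (fun '(j, p, x) => if Nat.eqb j i then x * path_cost G T f p else 0) g).
Proof.
  intros Hwf HN [Hg Hgmass] Hi.
  destruct (Nash_common_cost G T f i Hwf HN Hi) as [d [Hused Hmin]].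
  destruct HN as [[Hf Hfmass] _].
  transitivity (d * sumR (map (fun '(j, _, x) => if Nat.eqb j i then x else 0) g)).
  - rewrite Hgmass, <- (Hfmass i Hi), <- sumR_map_scal by auto.
    apply Req_le, sumR_map_ext. intros [[j p] x] Hin.
    destruct (Nat.eqb_spec j i) as [->|_]; [|ring].
    destruct (Hf _ _ _ Hin) as [_ [_ [Hx| <-]]]; [rewrite (Hused p x); auto|]; ring.
  - rewrite <- sumR_map_scal. apply sumR_map_le. intros [[j q] x] Hin.
    destruct (Nat.eqb_spec j i) as [->|_]; [|lra].
    destruct (Hg _ _ _ Hin) as [_ [Hq Hx]].
    pose proof (Hmin q Hq). nra.
Qed.

Lemma Nash_variational_inequality G T f g :
  wf_RP G -> Nash G T f -> feasible G g ->
  sumR (map (fun e => edge_cost G T f e * eflow f e) (seq 0 (nE G))) <=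
  sumR (map (fun e => edge_cost G T f e * eflow g e) (seq 0 (nE G))).
Proof.
  intros Hwf HN Hg.
  pose proof (proj1 (proj1 HN)) as Hf. pose proof (proj1 Hg) as Hg'.
  rewrite !sumR_weighted_eflow
    by (intros i p x Hin; first [apply Hf in Hin | apply Hg' in Hin];
        apply (in_Paths_edges G i); tauto).
  rewrite (sumR_by_commodity (fun _ p x => x * sumR (map (edge_cost G T f) p)) (nC G) f),
          (sumR_by_commodity (fun _ p x => x * sumR (map (edge_cost G T f) p)) (nC G) g)
    by (intros i p x Hin; first [apply Hf in Hin | apply Hg' in Hin]; tauto).
  apply sumR_map_le. intros i Hi. apply in_seq in Hi.
  apply Nash_commodity_cost_le; auto; lia.
Qed.

Lemma PoA_le_weaken T v v' : PoA_le T v -> v <= v' -> PoA_le T v'.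
Proof.
  intros HT Hv G f g Hwf HN Hg. specialize (HT G f g Hwf HN Hg).
  pose proof (total_latency_nonneg G g Hwf Hg). nra.
Qed.

Lemma PoA_le_of_local_bound (T : Mechanism) (v mu : R) : 0 <= mu ->
  (forall a b y z, 0 <= a -> 0 <= b -> 0 <= y -> 0 <= z ->
     y * (a * y + b) - v * (z * (a * z + b)) <= mu * (a * y + b + T a b y) * (y - z)) ->
  PoA_le T v.
Proof.
  intros Hmu Hloc G f g Hwf HN Hg.
  pose proof (Nash_variational_inequality G T f g Hwf HN Hg) as HVI.
  unfold total_latency.
  assert (Hsum :
    sumR (map (fun e => eflow f e * lat G e (eflow f e)) (seq 0 (nE G))) -
    v * sumR (map (fun e => eflow g e * lat G e (eflow g e)) (seq 0 (nE G))) <=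
    mu * (sumR (map (fun e => edge_cost G T f e * eflow f e) (seq 0 (nE G))) -
          sumR (map (fun e => edge_cost G T f e * eflow g e) (seq 0 (nE G))))).
  { rewrite <- sumR_map_scal, <- !sumR_map_minus, <- sumR_map_scal.
    apply sumR_map_le. intros e He. apply in_seq in He.
    destruct Hwf as [Hedges _]. destruct (Hedges e ltac:(lia)) as [_ [_ [Ha Hb]]].
    pose proof (eflow_nonneg G f e (proj1 HN)) as Hfe.
    pose proof (eflow_nonneg G g e Hg) as Hge.
    pose proof (Hloc _ _ _ _ Ha Hb Hfe Hge).
    unfold edge_cost, lat. lra. }
  nra.
Qed.

Definition poa_aff (g : R) : R := 4 / (3 + 2 * g - g ^ 2).

Lemma poa_aff_denom_pos g : 0 <= g <= 1 -> 0 < 3 + 2 * g - g ^ 2.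
Proof. intros; nra. Qed.

Lemma poa_aff_nonneg g : 0 <= g <= 1 -> 0 <= poa_aff g.
Proof.
  intros Hg. pose proof (poa_aff_denom_pos g Hg).
  unfold poa_aff, Rdiv. apply Rmult_le_pos; [lra | apply Rlt_le, Rinv_0_lt_compat; auto].
Qed.

(* Multiplied by [3 + 2g - g^2], the gap is [a ((1+g) y - 2 z)^2 + (1-g)^2 b y]. *)
Lemma affine_local_bound g a b y z : 0 <= g <= 1 ->
  0 <= a -> 0 <= b -> 0 <= y -> 0 <= z ->
  y * (a * y + b) - poa_aff g * (z * (a * z + b)) <=
  poa_aff g * ((1 + g) * a * y + b) * (y - z).
Proof.
  intros Hg Ha Hb Hy Hz.
  set (D := 3 + 2 * g - g ^ 2).
  assert (HD : 0 < D) by (apply poa_aff_denom_pos; auto).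
  assert (Hv : poa_aff g * D = 4) by (unfold poa_aff; fold D; field; lra).
  assert (Hgap :
    D * (poa_aff g * ((1 + g) * a * y + b) * (y - z)) -
    D * (y * (a * y + b) - poa_aff g * (z * (a * z + b))) =
    a * ((1 + g) * y - 2 * z) ^ 2 + (1 - g) ^ 2 * b * y).
  { transitivity (poa_aff g * D * (((1 + g) * a * y + b) * (y - z) + z * (a * z + b)) -
                  D * (y * (a * y + b))); [ring | rewrite Hv; unfold D; ring]. }
  assert (0 <= a * ((1 + g) * y - 2 * z) ^ 2)
    by (apply Rmult_le_pos; [lra | apply pow2_ge_0]).
  assert (0 <= (1 - g) ^ 2 * b * y)
    by (apply Rmult_le_pos; [apply Rmult_le_pos; [apply pow2_ge_0 | lra] | lra]).
  apply (Rmult_le_reg_l D); lra.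
Qed.

Lemma PoA_le_of_effective_toll (T : Mechanism) g mu : 0 <= g <= 1 -> 0 <= mu ->
  (forall a b y, 0 <= a -> 0 <= b -> 0 <= y ->
     mu * (a * y + b + T a b y) = (1 + g) * a * y + b) ->
  PoA_le T (poa_aff g).
Proof.
  intros Hg Hmu HT. apply PoA_le_of_local_bound with (mu := poa_aff g * mu).
  - apply Rmult_le_pos; auto using poa_aff_nonneg.
  - intros a b y z Ha Hb Hy Hz.
    rewrite (Rmult_assoc (poa_aff g) mu), HT by auto.
    apply affine_local_bound; auto.
Qed.

(** * Lower bounds *)

Lemma feasible_single_commodity G (h : Flow) :
  nC G = 1%nat -> mass (comm G 0) = 1 ->
  (forall i p x, In (i, p, x) h -> i = 0%nat /\ in_Paths G 0 p /\ 0 <= x) ->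
  sumR (map (fun '(_, _, x) => x) h) = 1 ->
  feasible G h.
Proof.
  intros HnC Hmass Hh Hsum. split.
  - intros i p x Hin. destruct (Hh i p x Hin) as [-> Hpx]. split; [lia | exact Hpx].
  - intros i Hi. assert (i = 0%nat) as -> by lia.
    rewrite Hmass, <- Hsum. apply sumR_map_ext. intros [[j p] x] Hin.
    destruct (Hh j p x Hin) as [-> _]. reflexivity.
Qed.

Lemma Nash_single_path G T p :
  feasible G [(0%nat, p, 1)] ->
  (forall q, in_Paths G 0 q ->
     path_cost G T [(0%nat, p, 1)] p <= path_cost G T [(0%nat, p, 1)] q) ->
  Nash G T [(0%nat, p, 1)].
Proof.
  intros Hf Hmin. split; auto.
  intros i p' x [Ht|[]] _ q Hq. injection Ht as <- <- _. auto.
Qed.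

Definition single_edge_net : RP := mkRP 2 [mkEdge 0 1 1 0] [mkComm 0 1 1].

(* Pigou's network; its constant link is split into the edges [0 -> 1 -> 2]
   because [wf_RP] forbids parallel edges. *)
Definition pigou_net (c : R) : RP :=
  mkRP 3 [mkEdge 0 2 1 0; mkEdge 0 1 0 c; mkEdge 1 2 0 0] [mkComm 0 2 1].

Lemma single_edge_net_wf : wf_RP single_edge_net.
Proof.
  split; [|split; [|split]].
  - intros e He. unfold nE in He; simpl in He. assert (e = 0%nat) as -> by lia.
    unfold edge; simpl. repeat split; lia || lra.
  - repeat constructor; simpl; intuition.
  - intros i Hi. unfold nC in Hi; simpl in Hi. assert (i = 0%nat) as -> by lia.
    unfold comm; simpl. repeat split; lia || lra.
  - simpl; lra.
Qed.

Lemma pigou_net_wf c : 0 <= c -> wf_RP (pigou_net c).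
Proof.
  intros Hc. split; [|split; [|split]].
  - intros e He. unfold nE in He; simpl in He.
    destruct e as [|[|[|e]]]; try lia; unfold edge; simpl; repeat split; lia || lra.
  - repeat constructor; simpl; intuition discriminate.
  - intros i Hi. unfold nC in Hi; simpl in Hi. assert (i = 0%nat) as -> by lia.
    unfold comm; simpl. repeat split; lia || lra.
  - simpl; lra.
Qed.

Lemma single_edge_net_paths q : in_Paths single_edge_net 0 q <-> q = [0%nat].
Proof.
  split.
  - intros [Hw _]. unfold comm in Hw; simpl in Hw.
    destruct q as [|e q]; simpl in Hw; [lia|].
    destruct Hw as [He [_ Hw]]. unfold nE in He; simpl in He.
    assert (e = 0%nat) as -> by lia.
    apply walk_from_sink in Hw as [-> _]; [reflexivity|].
    intros e' He'. unfold nE in He'; simpl in He'.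
    assert (e' = 0%nat) as -> by lia. unfold edge; simpl; lia.
  - intros ->. split; [cbn; unfold nE; simpl; repeat split; lia|].
    repeat constructor; simpl; intuition discriminate.
Qed.

Lemma pigou_net_paths c q :
  in_Paths (pigou_net c) 0 q <-> q = [0%nat] \/ q = [1%nat; 2%nat].
Proof.
  assert (Hsink : forall e, (e < nE (pigou_net c))%nat -> tl (edge (pigou_net c) e) <> 2%nat).
  { intros e He. unfold nE in He; simpl in He.
    destruct e as [|[|[|e]]]; try lia; unfold edge; simpl; lia. }
  split.
  - intros [Hw _]. unfold comm in Hw; simpl in Hw.
    destruct q as [|e q]; simpl in Hw; [lia|].
    destruct Hw as [He [Htl Hw]]. unfold nE in He; simpl in He.
    destruct e as [|[|[|e]]]; try lia; unfold edge in Htl, Hw; simpl in Htl, Hw; try lia.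
    + apply walk_from_sink in Hw as [-> _]; auto.
    + destruct q as [|e q]; simpl in Hw; [lia|].
      destruct Hw as [He' [Htl' Hw]]. unfold nE in He'; simpl in He'.
      destruct e as [|[|[|e]]]; try lia; unfold edge in Htl', Hw; simpl in Htl', Hw; try lia.
      apply walk_from_sink in Hw as [-> _]; auto.
  - intros Hq. split.
    + destruct Hq as [->| ->]; cbn; unfold nE; simpl; repeat split; lia.
    + destruct Hq as [->| ->]; repeat constructor; simpl; intuition discriminate.
Qed.

Lemma single_edge_net_latency : total_latency single_edge_net [(0%nat, [0%nat], 1)] = 1.
Proof. unfold total_latency, eflow, lat, edge; simpl. ring. Qed.

Lemma pigou_net_latency_direct c :
  total_latency (pigou_net c) [(0%nat, [0%nat], 1)] = 1.
Proof. unfold total_latency, eflow, lat, edge; simpl. ring. Qed.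

Lemma pigou_net_latency_split c y :
  total_latency (pigou_net c) [(0%nat, [0%nat], y); (0%nat, [1%nat; 2%nat], 1 - y)] =
  y * y + (1 - y) * c.
Proof. unfold total_latency, eflow, lat, edge; simpl. ring. Qed.

Lemma pigou_net_costs c T :
  path_cost (pigou_net c) T [(0%nat, [0%nat], 1)] [0%nat] = 1 + T 1 0 1 /\
  path_cost (pigou_net c) T [(0%nat, [0%nat], 1)] [1%nat; 2%nat] = c + T 0 c 0 + T 0 0 0.
Proof.
  unfold path_cost, eflow, lat, edge; simpl.
  rewrite !Rplus_0_r, Rmult_0_l, Rmult_1_l, !Rplus_0_l. split; ring.
Qed.

Lemma PoA_ge_1 T v : PoA_le T v -> 1 <= v.
Proof.
  intros HT.
  assert (Hf : feasible single_edge_net [(0%nat, [0%nat], 1)]).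
  { apply feasible_single_commodity; auto; [|simpl; lra].
    intros i p x [Ht|[]]. injection Ht as <- <- <-.
    split; [auto | split; [apply single_edge_net_paths; auto | lra]]. }
  assert (HN : Nash single_edge_net T [(0%nat, [0%nat], 1)]).
  { apply Nash_single_path; auto.
    intros q Hq. apply single_edge_net_paths in Hq as ->. lra. }
  pose proof (HT _ _ _ single_edge_net_wf HN Hf) as Hle.
  rewrite single_edge_net_latency in Hle. lra.
Qed.

Lemma poa_aff_le g v : 0 <= g <= 1 -> 4 <= v * (3 + 2 * g - g ^ 2) -> poa_aff g <= v.
Proof.
  intros Hg Hv. pose proof (poa_aff_denom_pos g Hg) as HD.
  apply (Rmult_le_reg_r (3 + 2 * g - g ^ 2)); auto.
  unfold poa_aff, Rdiv. rewrite Rmult_assoc, Rinv_l by lra. lra.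
Qed.

(* Witnesses: the Nash flow is all on the variable link (latency 1), the
   competing flow sends [(1 + g) / 2] there (latency [(3 + 2g - g^2) / 4]). *)
Lemma PoA_ge_pigou T v g : 0 <= g <= 1 ->
  1 + T 1 0 1 <= 1 + g + T 0 (1 + g) 0 + T 0 0 0 ->
  PoA_le T v -> poa_aff g <= v.
Proof.
  intros Hg Hcost HT.
  assert (Hwf : wf_RP (pigou_net (1 + g))) by (apply pigou_net_wf; lra).
  assert (Hf : feasible (pigou_net (1 + g)) [(0%nat, [0%nat], 1)]).
  { apply feasible_single_commodity; auto; [|simpl; lra].
    intros i p x [Ht|[]]. injection Ht as <- <- <-.
    split; [auto | split; [apply pigou_net_paths; auto | lra]]. }
  assert (Hh : feasible (pigou_net (1 + g))
                 [(0%nat, [0%nat], (1 + g) / 2); (0%nat, [1%nat; 2%nat], 1 - (1 + g) / 2)]).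
  { apply feasible_single_commodity; auto; [|simpl; lra].
    intros i p x [Ht|[Ht|[]]]; injection Ht as <- <- <-;
      (split; [auto | split; [apply pigou_net_paths; auto | lra]]). }
  assert (HN : Nash (pigou_net (1 + g)) T [(0%nat, [0%nat], 1)]).
  { apply Nash_single_path; auto.
    destruct (pigou_net_costs (1 + g) T) as [Hdirect Hsplit].
    intros q Hq. apply pigou_net_paths in Hq as [-> | ->]; lra. }
  pose proof (HT _ _ _ Hwf HN Hh) as Hle.
  rewrite pigou_net_latency_direct, pigou_net_latency_split in Hle.
  apply poa_aff_le; auto.
  replace (3 + 2 * g - g ^ 2)
    with (4 * ((1 + g) / 2 * ((1 + g) / 2) + (1 - (1 + g) / 2) * (1 + g))) by field.
  lra.
Qed.

Lemma optimal_of_tight_bound bnd T v : bnd T -> PoA_le T v ->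
  (forall T' v', bnd T' -> PoA_le T' v' -> v <= v') ->
  optimal_among bnd T /\ PoA_is T v.
Proof.
  intros HT Hv Hlow. split; split; auto.
  - intros T' HT' v' Hv'. apply PoA_le_weaken with v; eauto.
  - intros v' Hv'v Hv'. specialize (Hlow T v' HT Hv'). lra.
Qed.

Lemma poa_aff_1 : poa_aff 1 = 1.
Proof. unfold poa_aff. field. Qed.

Lemma poa_aff_decreasing g1 g2 : 0 <= g1 -> g1 < g2 -> g2 <= 1 -> poa_aff g2 < poa_aff g1.
Proof.
  intros H1 H12 H2. unfold poa_aff, Rdiv.
  apply Rmult_lt_compat_l; [lra|].
  apply Rinv_lt_contravar; [apply Rmult_lt_0_compat; apply poa_aff_denom_pos; lra | nra].
Qed.

(* The subsidy [-beta b] is the toll [beta_hat a f] with all costs scaled by [1 - beta]. *)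
Definition toll_plus (beta : R) : R := if Rlt_dec beta 1 then beta else 1.
Definition toll_minus (beta : R) : R := if Rlt_dec beta (1/2) then beta_hat beta else 1.

Lemma beta_hat_eq beta : beta < 1 -> beta_hat beta = beta / (1 - beta).
Proof. intros; unfold beta_hat; field; lra. Qed.

Lemma toll_plus_range beta : 0 <= beta -> 0 <= toll_plus beta <= 1.
Proof. intros; unfold toll_plus; destruct Rlt_dec; lra. Qed.

Lemma beta_hat_range beta : 0 <= beta <= 1/2 -> 0 <= beta_hat beta <= 1.
Proof.
  intros Hb. rewrite beta_hat_eq by lra.
  split; [apply Rmult_le_pos; [lra | apply Rlt_le, Rinv_0_lt_compat; lra] |].
  apply (Rmult_le_reg_r (1 - beta)); [lra|]. unfold Rdiv.
  rewrite Rmult_assoc, Rinv_l by lra. lra.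
Qed.

Lemma toll_minus_range beta : 0 <= beta -> 0 <= toll_minus beta <= 1.
Proof.
  intros Hb; unfold toll_minus; destruct Rlt_dec; [apply beta_hat_range | ]; lra.
Qed.

Lemma toll_plus_lt_toll_minus beta : 0 < beta < 1 -> toll_plus beta < toll_minus beta.
Proof.
  intros Hb. unfold toll_plus, toll_minus.
  destruct (Rlt_dec beta 1); [|lra]. destruct Rlt_dec; [|lra].
  rewrite beta_hat_eq by lra.
  apply (Rmult_lt_reg_r (1 - beta)); [lra|]. unfold Rdiv.
  rewrite Rmult_assoc, Rinv_l by lra. nra.
Qed.

Lemma poa_plus_eq beta : poa_plus beta = poa_aff (toll_plus beta).
Proof.
  unfold poa_plus, toll_plus; destruct Rlt_dec; [reflexivity | now rewrite poa_aff_1].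
Qed.

Lemma poa_minus_eq beta : poa_minus beta = poa_aff (toll_minus beta).
Proof.
  unfold poa_minus, toll_minus; destruct Rlt_dec; [reflexivity | now rewrite poa_aff_1].
Qed.

Lemma T_opt_plus_eq beta a b y : T_opt_plus beta a b y = toll_plus beta * a * y.
Proof. unfold T_opt_plus, toll_plus; destruct Rlt_dec; ring. Qed.

Lemma T_opt_minus_scaled beta a b y :
  (1 + toll_minus beta) * (a * y + b + T_opt_minus beta a b y) =
  (1 + toll_minus beta) * a * y + b.
Proof.
  unfold T_opt_minus, toll_minus, beta_hat; destruct Rlt_dec; field; lra.
Qed.

Lemma T_opt_plus_optimal beta : 0 <= beta ->
  optimal_among (tolling_bounded beta) (T_opt_plus beta) /\
  PoA_is (T_opt_plus beta) (poa_plus beta).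
Proof.
  intros Hb. apply optimal_of_tight_bound.
  - intros a b y Ha Hb' Hy. rewrite T_opt_plus_eq.
    assert (0 <= a * y) by (apply Rmult_le_pos; lra).
    unfold toll_plus; destruct Rlt_dec; split; nra.
  - rewrite poa_plus_eq. apply PoA_le_of_effective_toll with (mu := 1).
    + apply toll_plus_range; auto.
    + lra.
    + intros a b y _ _ _. rewrite T_opt_plus_eq. ring.
  - intros T' v HT' Hv. rewrite poa_plus_eq. unfold toll_plus. destruct Rlt_dec.
    + apply PoA_ge_pigou with T'; auto; [lra|].
      pose proof (HT' 1 0 1). pose proof (HT' 0 (1 + beta) 0). pose proof (HT' 0 0 0).
      lra.
    + rewrite poa_aff_1. apply (PoA_ge_1 T'); auto.
Qed.

Lemma T_opt_minus_optimal beta : 0 <= beta ->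
  optimal_among (subsidy_bounded beta) (T_opt_minus beta) /\
  PoA_is (T_opt_minus beta) (poa_minus beta).
Proof.
  intros Hb. apply optimal_of_tight_bound.
  - intros a b y Ha Hb' Hy. unfold T_opt_minus.
    assert (0 <= a * y) by (apply Rmult_le_pos; lra).
    destruct Rlt_dec; split; nra.
  - rewrite poa_minus_eq. apply PoA_le_of_effective_toll with (mu := 1 + toll_minus beta).
    + apply toll_minus_range; auto.
    + pose proof (toll_minus_range beta Hb); lra.
    + intros a b y _ _ _. apply T_opt_minus_scaled.
  - intros T' v HT' Hv. rewrite poa_minus_eq. unfold toll_minus. destruct Rlt_dec.
    + apply PoA_ge_pigou with T'; [apply beta_hat_range; lra | | auto].
      assert (Hc : (1 + beta_hat beta) * (1 - beta) = 1) by (unfold beta_hat; field; lra).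
      pose proof (HT' 1 0 1). pose proof (HT' 0 (1 + beta_hat beta) 0). pose proof (HT' 0 0 0).
      nra.
    + rewrite poa_aff_1. apply (PoA_ge_1 T'); auto.
Qed.

Theorem proposition1 :
  (forall beta : R, 0 <= beta ->
     optimal_among (tolling_bounded beta) (T_opt_plus beta) /\
     PoA_is (T_opt_plus beta) (poa_plus beta) /\
     optimal_among (subsidy_bounded beta) (T_opt_minus beta) /\
     PoA_is (T_opt_minus beta) (poa_minus beta)) /\
  (forall beta : R, 0 < beta < 1 -> poa_minus beta < poa_plus beta).
Proof.
  split.
  - intros beta Hb.
    destruct (T_opt_plus_optimal beta Hb), (T_opt_minus_optimal beta Hb). tauto.
  - intros beta Hb. rewrite poa_plus_eq, poa_minus_eq.
    apply poa_aff_decreasing.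
    + apply toll_plus_range; lra.
    + apply toll_plus_lt_toll_minus; auto.
    + apply toll_minus_range; lra.
Qed.
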